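(* Let $\mathcal{G}=(\mathcal{V}_A\cup\mathcal{V}_T,\mathcal{E},w)$ be a weighted bipartite graph with $|\mathcal{V}_A|\le|\mathcal{V}_T|$ having a maximum matching, and let $e^*\in A(\mathcal{G})$ be a bottleneck edge. Let $\{\delta_e\}_{e\in\mathcal{E}}$ be perturbations with perturbed weights $\bar w_e=w_e+\delta_e$ such that for every $x\in\mathcal{E}$: $\bar w_x>\bar w_{e^*}$ if and only if $w_x>w_{e^*}$, and $\bar w_x<\bar w_{e^*}$ if and only if $w_x<w_{e^*}$. Then the bottleneck assignment $e^*$ is robust to $\{\delta_e\}$, i.e. $e^*\in A(\bar{\mathcal{G}})$.
   Context: A weighted bipartite graph $\mathcal{G}=(\mathcal{V}_A\cup\mathcal{V}_T,\mathcal{E},w)$ has disjoint vertex sets $\mathcal{V}_A,\mathcal{V}_T$, edge set $\mathcal{E}\subseteq\mathcal{V}_A\times\mathcal{V}_T$ and real edge weights $w_e$. A matching is a set of pairwise non-adjacent edges; a maximum matching is a matching covering every vertex of $\mathcal{V}_A$. For a graph $H$ with a maximum matching, $b(H)=\min_M\max_{e\in M}w_e$ over its maximum matchings; a bottleneck edge of $H$ is an edge $e$ with $w_e=b(H)$ lying in some maximum matching $M$ with $\max_{e'\in M}w_{e'}=b(H)$; $A(H)$ is the set of bottleneck edges. The perturbed graph $\bar{\mathcal{G}}$ has the same vertices and edges as $\mathcal{G}$ and weights $\bar w_e$; $e^*$ is robust to the perturbation if $e^*\in A(\bar{\mathcal{G}})$. *)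

From HB Require Import structures.
From mathcomp Require Import all_boot all_order all_algebra.
Set Implicit Arguments. Unset Strict Implicit. Unset Printing Implicit Defensive.
Import Order.TTheory GRing.Theory Num.Theory.
Local Open Scope ring_scope.

(* A bipartite graph with vertex classes VA, VT (finite types) is given by an
   edge set E : {set VA * VT}; weights are a function w : VA * VT -> R
   (only its values on E matter). *)

Section Bottleneck.
Variables (VA VT : finType) (R : realDomainType).
Implicit Types (E M : {set VA * VT}) (w : VA * VT -> R).

Definition is_matching M : Prop :=
  forall e1 e2, e1 \in M -> e2 \in M -> e1 != e2 ->
    (e1.1 != e2.1) /\ (e1.2 != e2.2).

Definition is_max_matching E M : Prop :=
  M \subset E /\ is_matching M /\ (forall a : VA, exists2 e, e \in M & e.1 = a).

Definition is_max_weight w M (m : R) : Prop :=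
  (exists2 e, e \in M & w e = m) /\ (forall e, e \in M -> w e <= m).

Definition is_bottleneck_value E w (b : R) : Prop :=
  (exists M, is_max_matching E M /\ is_max_weight w M b) /\
  (forall M m, is_max_matching E M -> is_max_weight w M m -> b <= m).

Definition bottleneck_edge E w (e : VA * VT) : Prop :=
  e \in E /\
  exists b, [/\ is_bottleneck_value E w b, w e = b &
    exists M, [/\ is_max_matching E M, e \in M & is_max_weight w M b]].

End Bottleneck.

From HB Require Import structures.
From mathcomp Require Import all_boot all_order all_algebra.
Set Implicit Arguments. Unset Strict Implicit. Unset Printing Implicit Defensive.
Import Order.TTheory GRing.Theory Num.Theory.
Local Open Scope ring_scope.

(* Only the position of each weight relative to the pivot weight [w e*]
   enters the definition of a bottleneck edge: a maximum matching through
   [e*] whose edges all weigh at most [w e*] keeps this property, and every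
   maximum matching has an edge weighing at least [w e*] (its heaviest edge,
   by minimality of the bottleneck value), which it also keeps. *)

Section Bottleneck.
Variables (VA VT : finType) (R : realDomainType).
Implicit Types (E M : {set VA * VT}) (w : VA * VT -> R).

Lemma exists_max_weight_edge w M x :
  x \in M -> exists2 e, e \in M & is_max_weight w M (w e).
Proof.
move=> xM; case: (arg_maxP w xM) => e eM maxe.
by exists e => //; split; [exists e | move=> e' /maxe].
Qed.

Lemma max_matching_neq0 E M (a : VA) : is_max_matching E M -> M != set0.
Proof. by case=> _ [_ /(_ a) [x xM _]]; apply/set0Pn; exists x. Qed.

Lemma bottleneck_value_le_max_edge E w b M (a : VA) :
  is_bottleneck_value E w b -> is_max_matching E M ->
  exists2 e, e \in M & b <= w e.
Proof.
move=> [_ bmin] maxM; have /set0Pn [x xM] := max_matching_neq0 a maxM.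
have [e eM maxe] := exists_max_weight_edge w xM.
by exists e => //; apply: bmin maxe.
Qed.

Section PivotOrder.
Variables (E : {set VA * VT}) (w w' : VA * VT -> R) (p : VA * VT).
Hypothesis pivot_order : forall x, x \in E ->
  (w' x > w' p <-> w x > w p) /\ (w' x < w' p <-> w x < w p).

Lemma le_pivotE x : x \in E -> (w' x <= w' p) = (w x <= w p).
Proof.
move=> /pivot_order [[gt'_gt gt_gt'] _]; rewrite !leNgt.
by apply/idP/idP; apply: contra; [exact: gt_gt' | exact: gt'_gt].
Qed.

Lemma ge_pivotE x : x \in E -> (w' p <= w' x) = (w p <= w x).
Proof.
move=> /pivot_order [_ [lt'_lt lt_lt']]; rewrite !leNgt.
by apply/idP/idP; apply: contra; [exact: lt_lt' | exact: lt'_lt].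
Qed.

Lemma max_weight_pivot M :
  M \subset E -> p \in M -> is_max_weight w M (w p) -> is_max_weight w' M (w' p).
Proof.
move=> /subsetP ME pM [_ lep]; split; first by exists p.
by move=> e eM; rewrite le_pivotE ?ME ?lep.
Qed.

Theorem bottleneck_edge_pivot_order :
  bottleneck_edge E w p -> bottleneck_edge E w' p.
Proof.
move=> [pE [b [bvalue wpb [M0 [maxM0 pM0 wM0]]]]].
have w'M0 : is_max_weight w' M0 (w' p).
  by apply: max_weight_pivot; [case: maxM0 | | rewrite wpb].
split=> //; exists (w' p); split=> //; last by exists M0.
split; first by exists M0.
move=> M m maxM [_ lem].
have [e eM be] := bottleneck_value_le_max_edge p.1 bvalue maxM.
have eE : e \in E by case: maxM => /subsetP ME _; apply: ME.
by apply: le_trans (lem e eM); rewrite ge_pivotE // wpb.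
Qed.

End PivotOrder.
End Bottleneck.

Theorem proposition2 (VA VT : finType) (R : realDomainType)
  (E : {set VA * VT}) (w delta : VA * VT -> R) (estar : VA * VT) :
  (#|VA| <= #|VT|)%N ->
  (exists M, is_max_matching E M) ->
  bottleneck_edge E w estar ->
  (forall x, x \in E ->
     ((w x + delta x > w estar + delta estar) <-> (w x > w estar)) /\
     ((w x + delta x < w estar + delta estar) <-> (w x < w estar))) ->
  bottleneck_edge E (fun e => w e + delta e) estar.
Proof.
(* The cardinality and existence hypotheses are implied by the bottleneck edge. *)
move=> _ _ bottleneck pivot_order.
exact: (bottleneck_edge_pivot_order (w' := fun e => w e + delta e) pivot_order bottleneck).
Qed.
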